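(* Let $K$ be a number field and let ${\cal Z}_P\subset K^n$ be a finite set of points. Then the radical ideal of $K[x_1,\dots,x_n]$ associated with ${\cal Z}_P$ (the ideal of all polynomials vanishing on ${\cal Z}_P$) is generated by a set of polynomials of the form $$ \hat a_{i_1}\hat a_{i_2}\cdots\hat a_{i_s},\qquad (i_1,\dots,i_s)\in\Gamma_s,\quad s\in\{1,\dots,\bar n\}, $$ for some integer $\bar n>n$, some affine-linear polynomials $\hat a_1,\dots,\hat a_{\bar n}\in K[x_1,\dots,x_n]$ and some sets $\Gamma_s\subseteq\{(i_1,\dots,i_s)\in\{1,\dots,\bar n\}^s: i_1<i_2<\dots<i_s\}$.
   Context: An affine-linear polynomial is one of the form $a_{n+1}+\sum_{i=1}^n a_ix_i$ with coefficients in $K$. *)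

From HB Require Import structures.
From mathcomp Require Import all_boot all_order all_algebra all_field.
From mathcomp Require Import mpoly.
Set Implicit Arguments. Unset Strict Implicit. Unset Printing Implicit Defensive.
Import GRing.Theory.
Local Open Scope ring_scope.

(* A number field is a finite-dimensional field extension of Q:
   K : fieldExtType rat.  Points of K^n are functions 'I_n -> K, and
   polynomials of K[x_1,...,x_n] are elements of {mpoly K[n]}. *)

Definition affine_linear (K : fieldType) (n : nat) (p : {mpoly K[n]}) : Prop :=
  exists (c0 : K) (c : 'I_n -> K), p = c0%:MP + \sum_(i < n) c i *: 'X_i.

Definition vanishes_on (K : fieldType) (n : nat) (Z : seq ('I_n -> K))
  (p : {mpoly K[n]}) : Prop :=
  all (fun z => p.@[z] == 0) Z.

Definition in_ideal_gen (K : fieldType) (n : nat) (G : seq {mpoly K[n]})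
  (p : {mpoly K[n]}) : Prop :=
  exists c : seq {mpoly K[n]}, p = \sum_(j < size G) c`_j * G`_j.

Definition incr_tuple (m s : nat) (t : seq 'I_m) : bool :=
  (size t == s) && sorted (fun i j : 'I_m => (i < j)%N) t.

Definition prod_gens (K : fieldType) (n nbar : nat) (a : 'I_nbar -> {mpoly K[n]})
  (Gamma : nat -> seq (seq 'I_nbar)) : seq {mpoly K[n]} :=
  flatten [seq [seq \prod_(i <- t) a i | t <- Gamma s] | s <- iota 1 nbar].

From HB Require Import structures.
From mathcomp Require Import all_boot all_order all_algebra all_field.
From mathcomp Require Import mpoly ring zify.
Set Implicit Arguments. Unset Strict Implicit. Unset Printing Implicit Defensive.
Import GRing.Theory.
Local Open Scope ring_scope.

(* The vanishing ideal of distinct points z_1, ..., z_m of K^n is the product of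
   their maximal ideals m_k = (x_j - z_k j)_j.  If p vanishes on all points, then
   p lies in m_2 ... m_m by induction, and a u in m_2 ... m_m with u(z_1) = 1
   gives p = p u + (1 - u) p in m_1 m_2 ... m_m.  That product is generated by the
   products of one form x_j - z_k j per point; listing these m n affine forms,
   followed by constant forms 1, makes each generator a product over an
   increasing index tuple. *)

Lemma meval_finfun (R : nzRingType) (n : nat) (p : {mpoly R[n]}) (z : 'I_n -> R) :
  p.@[finfun z] = p.@[z].
Proof. by apply: meval_eq => i; rewrite ffunE. Qed.

Section IdealGen.
Variables (K : fieldType) (n : nat).
Implicit Types (G H : seq {mpoly K[n]}) (p q : {mpoly K[n]}).

Lemma in_ideal_gen0 G : in_ideal_gen G 0.
Proof. by exists [::]; rewrite big1 // => i _; rewrite nth_nil mul0r. Qed.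

Lemma in_ideal_genD G p q :
  in_ideal_gen G p -> in_ideal_gen G q -> in_ideal_gen G (p + q).
Proof.
case=> [c ->] [d ->]; exists (mkseq (fun j => c`_j + d`_j) (size G)).
by rewrite -big_split; apply: eq_bigr => i _; rewrite nth_mkseq // mulrDl.
Qed.

Lemma in_ideal_genMl G r p : in_ideal_gen G p -> in_ideal_gen G (r * p).
Proof.
case=> [c ->]; exists (mkseq (fun j => r * c`_j) (size G)).
by rewrite mulr_sumr; apply: eq_bigr => i _; rewrite nth_mkseq // mulrA.
Qed.

Lemma in_ideal_gen_sum G m (F : 'I_m -> {mpoly K[n]}) :
  (forall i, in_ideal_gen G (F i)) -> in_ideal_gen G (\sum_i F i).
Proof.
by move=> GF; apply: big_ind => //; [apply: in_ideal_gen0 | apply: in_ideal_genD].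
Qed.

Lemma in_ideal_gen_mem G g : g \in G -> in_ideal_gen G g.
Proof.
move=> Gg; exists (mkseq (fun j => ((j == index g G)%:R : {mpoly K[n]})) (size G)).
have iG : (index g G < size G)%N by rewrite index_mem.
rewrite (bigD1 (Ordinal iG)) //= big1 => [|i /eqP neq_i].
  by rewrite nth_mkseq // eqxx mul1r nth_index // addr0.
rewrite nth_mkseq //; case: eqP => [eq_i | _]; last by rewrite mul0r.
by case: neq_i; apply: val_inj.
Qed.

Lemma in_ideal_gen_trans G H p :
  (forall g, g \in G -> in_ideal_gen H g) -> in_ideal_gen G p -> in_ideal_gen H p.
Proof.
move=> GH [c ->]; apply: in_ideal_gen_sum => i.
by apply: in_ideal_genMl; apply: GH; apply: mem_nth.
Qed.

Lemma in_ideal_gen_eq_mem G H p : G =i H -> in_ideal_gen G p <-> in_ideal_gen H p.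
Proof.
move=> eqGH; split; apply: in_ideal_gen_trans => g Gg; apply: in_ideal_gen_mem.
  by rewrite -eqGH.
by rewrite eqGH.
Qed.

Lemma in_ideal_genM G H p q : in_ideal_gen G p -> in_ideal_gen H q ->
  in_ideal_gen [seq g * h | g <- G, h <- H] (p * q).
Proof.
move=> [c ->] [d ->]; rewrite mulr_suml; apply: in_ideal_gen_sum => i.
rewrite -mulrA mulr_sumr; apply: in_ideal_genMl; apply: in_ideal_gen_sum => j.
rewrite mulrCA; apply: in_ideal_genMl; apply: in_ideal_gen_mem.
by apply: allpairs_f; apply: mem_nth.
Qed.

Lemma meval_in_ideal_gen G p (x : 'I_n -> K) : in_ideal_gen G p ->
  (forall g, g \in G -> g.@[x] = 0) -> p.@[x] = 0.
Proof.
case=> [c ->] Gx; rewrite (big_morph _ (@mevalD _ _ x) (@meval0 _ _ x)).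
by rewrite big1 // => i _; rewrite mevalM [X in _ * X]Gx ?mulr0 //; exact: mem_nth.
Qed.

End IdealGen.

Section MaximalIdeal.
Variables (K : fieldType) (n : nat) (z : 'I_n -> K).

Definition max_ideal_gens : seq {mpoly K[n]} := [seq 'X_j - (z j)%:MP | j <- enum 'I_n].

Lemma in_max_ideal_sub_meval (p : {mpoly K[n]}) :
  in_ideal_gen max_ideal_gens (p - (p.@[z])%:MP).
Proof.
pose congr_at_z q := in_ideal_gen max_ideal_gens (q - (q.@[z])%:MP).
have congrD q r : congr_at_z q -> congr_at_z r -> congr_at_z (q + r).
  move=> zq zr; rewrite /congr_at_z mevalD mpolyCD.
  rewrite (_ : _ - _ = (q - (q.@[z])%:MP) + (r - (r.@[z])%:MP)); last by ring.
  exact: in_ideal_genD.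
have congrM q r : congr_at_z q -> congr_at_z r -> congr_at_z (q * r).
  move=> zq zr; rewrite /congr_at_z mevalM mpolyCM.
  rewrite (_ : _ - _ = q * (r - (r.@[z])%:MP) + (r.@[z])%:MP * (q - (q.@[z])%:MP)).
    by apply: in_ideal_genD; apply: in_ideal_genMl.
  by ring.
have congrC c : congr_at_z c%:MP by rewrite /congr_at_z mevalC subrr; apply: in_ideal_gen0.
have congrX i : congr_at_z 'X_i.
  by rewrite /congr_at_z mevalXU; apply/in_ideal_gen_mem/map_f; rewrite mem_enum.
have congrXm m : congr_at_z 'X_[m].
  rewrite mpolyXE_id; apply: (big_ind congr_at_z) => [|q r|i _].
  - by rewrite -mpolyC1.
  - exact: congrM.
  by elim: (m i) => [|k IHk]; [rewrite expr0 -mpolyC1 | rewrite exprS; apply: congrM].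
rewrite [p]mpolyE; apply: (big_ind congr_at_z) => [|q r|m _].
- by rewrite -mpolyC0.
- exact: congrD.
by rewrite -mul_mpolyC; apply: congrM.
Qed.

Lemma in_max_ideal_root (p : {mpoly K[n]}) : p.@[z] = 0 -> in_ideal_gen max_ideal_gens p.
Proof. by move=> pz0; have := in_max_ideal_sub_meval p; rewrite pz0 subr0. Qed.

End MaximalIdeal.

Section VanishingIdeal.
Variables (K : fieldType) (n : nat).
Local Notation point := {ffun 'I_n -> K}.
Implicit Types (F : seq point) (p : {mpoly K[n]}).

Definition vanishing_gens F : seq {mpoly K[n]} :=
  foldr (fun (z : point) G => [seq g * h | g <- max_ideal_gens z, h <- G]) [:: 1] F.

Lemma meval_vanishing_gens F g (x : point) :
  g \in vanishing_gens F -> x \in F -> g.@[x] = 0.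
Proof.
elim: F g => [|z F IHF] g //= /allpairsP[[h g'] /= [/mapP[j _ ->] Fg' ->]].
rewrite in_cons mevalM => /orP[/eqP ->|Fx]; last by rewrite (IHF g') ?mulr0.
by rewrite mevalB mevalXU mevalC subrr mul0r.
Qed.

Lemma separating_poly F (z : point) : z \notin F ->
  exists2 u, in_ideal_gen (vanishing_gens F) u & u.@[z] = 1.
Proof.
elim: F => [_ | z' F IHF].
  by exists 1; [apply/in_ideal_gen_mem/mem_head | rewrite meval1].
rewrite in_cons negb_or => /andP[neq_zz' /IHF[u' Fu' u'z]].
have [j neq_j] : exists j, z j != z' j.
  apply/existsP; apply: contraR neq_zz' => /existsPn eq_zz'.
  by apply/eqP/ffunP => j; apply/eqP/negbNE/eq_zz'.
exists (((z j - z' j)^-1)%:MP * (('X_j - (z' j)%:MP) * u')).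
  apply/in_ideal_genMl/in_ideal_genM => //.
  by apply/in_ideal_gen_mem/map_f; rewrite mem_enum.
by rewrite !mevalM mevalC mevalB mevalXU mevalC u'z mulr1 mulVf // subr_eq0.
Qed.

Theorem vanishing_gensP F : uniq F -> forall p,
  all (fun x : point => p.@[x] == 0) F <-> in_ideal_gen (vanishing_gens F) p.
Proof.
move=> uniqF p; split; last first.
  move=> Fp; apply/allP => x Fx; apply/eqP/(meval_in_ideal_gen Fp) => g Fg.
  exact: meval_vanishing_gens Fg Fx.
elim: F uniqF p => [_ p _ | z F IHF /andP[zF uniqF] p /andP[/eqP pz Fp]].
  by rewrite -[p]mulr1; apply/in_ideal_genMl/in_ideal_gen_mem/mem_head.
have [u Fu uz] := separating_poly zF.
have u1z : (1 - u).@[z] = 0 by rewrite mevalB meval1 uz subrr.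
rewrite (_ : p = p * u + (1 - u) * p); last by ring.
by apply: in_ideal_genD; apply: in_ideal_genM;
  [exact: in_max_ideal_root | | exact: in_max_ideal_root | exact: IHF].
Qed.

End VanishingIdeal.

Section AffineLinear.
Variables (K : fieldType) (n : nat).

Lemma affine_linearC (c : K) : affine_linear (c%:MP : {mpoly K[n]}).
Proof. by exists c, (fun=> 0); rewrite big1 ?addr0 // => i _; rewrite scale0r. Qed.

Lemma affine_linear_XsubC (j : 'I_n) (c : K) : affine_linear ('X_j - c%:MP : {mpoly K[n]}).
Proof.
exists (- c), (fun i => (i == j)%:R); rewrite mpolyCN addrC (bigD1 j) //= eqxx scale1r.
by rewrite big1 ?addr0 // => i /negbTE ->; rewrite scale0r.
Qed.

End AffineLinear.

Section AffineForms.
Variables (K : fieldType) (n : nat).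
Local Notation point := {ffun 'I_n -> K}.
Implicit Types (F : seq point) (z : point).

Definition affine_forms F : seq {mpoly K[n]} := flatten [seq max_ideal_gens z | z <- F].

(* Indices from [size F * n] on address the constant form [1], the default of [nth]. *)
Definition affine_form F (i : nat) : {mpoly K[n]} := nth 1 (affine_forms F) i.

Lemma size_affine_forms F : size (affine_forms F) = (size F * n)%N.
Proof. by elim: F => //= z F IHF; rewrite size_cat IHF size_map size_enum_ord mulSn. Qed.

Lemma affine_form_cons_ord z F (j : 'I_n) : affine_form (z :: F) j = 'X_j - (z j)%:MP.
Proof.
rewrite /affine_form /= nth_cat size_map size_enum_ord ltn_ord.
by rewrite (nth_map j) ?size_enum_ord // nth_ord_enum.
Qed.

Lemma affine_form_cons_addn z F i : affine_form (z :: F) (n + i) = affine_form F i.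
Proof. by rewrite /affine_form /= nth_cat size_map size_enum_ord ltnNge leq_addr addKn. Qed.

Lemma affine_form_default F i : (size F * n <= i)%N -> affine_form F i = 1.
Proof. by move=> Fi; rewrite /affine_form nth_default ?size_affine_forms. Qed.

Lemma affine_linear_affine_form F i : affine_linear (affine_form F i).
Proof.
rewrite /affine_form; have [iF | /(nth_default 1) ->] := ltnP i (size (affine_forms F)).
  have /flattenP[_ /mapP[z _ ->] /mapP[j _ ->]] := mem_nth 1 iF.
  exact: affine_linear_XsubC.
by rewrite -mpolyC1; apply: affine_linearC.
Qed.

(* The tuple [(j_0, ..., j_(m-1))] of coordinates is encoded by the indices
   [k * n + j_k] of the forms ['X_(j_k) - z_k j_k]. *)
Fixpoint index_choices (m : nat) : seq (seq nat) :=
  if m is m'.+1 then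
    [seq nat_of_ord j :: map (addn n) t
      | j : 'I_n <- enum 'I_n, t : seq nat <- index_choices m']
  else [:: [::]].

Lemma vanishing_gensE F :
  vanishing_gens F = [seq \prod_(i <- t) affine_form F i | t <- index_choices (size F)].
Proof.
elim: F => [|z F IHF] /=; first by rewrite big_nil.
rewrite IHF map_allpairs allpairs_mapl allpairs_mapr; apply: eq_allpairs => j t /=.
rewrite big_cons big_map affine_form_cons_ord; congr (_ * _).
by apply: eq_bigr => i _; rewrite affine_form_cons_addn.
Qed.

Lemma size_index_choices m t : t \in index_choices m -> size t = m.
Proof.
elim: m t => [|m IHm] t /=; first by rewrite inE => /eqP ->.
by case/allpairsP => [[j t'] /= [_ t't ->]] /=; rewrite size_map (IHm _ t't).
Qed.

Lemma index_choices_sorted m t b :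
  t \in index_choices m -> (m * n <= b)%N -> sorted ltn (rcons t b).
Proof.
elim: m t b => [|m IHm] t b /=; first by rewrite inE => /eqP ->.
case/allpairsP => [[j t'] /= [_ t't ->]]; rewrite mulSn => nmb /=.
have -> : rcons (map (addn n) t') b = map (addn n) (rcons t' (b - n)%N).
  by rewrite map_rcons subnKC //; lia.
rewrite path_sortedE; last exact: ltn_trans.
rewrite all_map sorted_map (eq_sorted (ltn_add2l n)) IHm //; last by lia.
by rewrite andbT; apply/allP => i _ /=; rewrite ltn_addr.
Qed.

Lemma index_choices_lt m t i : t \in index_choices m -> i \in t -> (i < m * n)%N.
Proof.
move=> tm ti; have := index_choices_sorted tm (leqnn _).
rewrite -cats1 sorted_pairwise ?pairwise_cat; last exact: ltn_trans.
by case/and3P => /allrelP lt_t _ _; apply: lt_t; rewrite ?mem_head.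
Qed.

End AffineForms.

Section IndexFamily.
Variables (K : fieldType) (n : nat) (F : seq {ffun 'I_n -> K}).
Local Notation N := (size F * n + size F + n)%N.

(* Each tuple is closed by the index [N] of a constant form, so that it is
   nonempty even for [F = [::]]; [N] is large enough for [n < N.+1] and for
   tuples of length [size F + 1] to fit even when [n = 0]. *)

Definition index_family (s : nat) : seq (seq 'I_N.+1) :=
  if s == (size F).+1 then [seq rcons (map inord t) ord_max | t <- index_choices n (size F)]
  else [::].

Lemma map_val_index_family t : t \in index_choices n (size F) ->
  map val (rcons (map (@inord N) t) ord_max) = rcons t N.
Proof.
move=> tF; rewrite map_rcons -map_comp map_id_in // => i ti /=.
by rewrite inordK //; have := index_choices_lt tF ti; lia.
Qed.

Lemma index_family_incr s t : t \in index_family s -> incr_tuple s t.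
Proof.
rewrite /index_family; case: eqP => // -> /mapP[t' t'F ->].
rewrite /incr_tuple size_rcons size_map (size_index_choices t'F) eqxx /=.
suff : sorted ltn (map val (rcons (map (@inord N) t') ord_max)) by rewrite sorted_map.
by rewrite map_val_index_family //; apply: index_choices_sorted t'F _; lia.
Qed.

Lemma prod_index_family t : t \in index_choices n (size F) ->
  \prod_(i <- rcons (map (@inord N) t) ord_max) affine_form F i =
  \prod_(i <- t) affine_form F i.
Proof.
move=> tF; rewrite -(big_map val xpredT (affine_form F)) map_val_index_family //.
by rewrite -cats1 big_cat big_seq1 /= affine_form_default ?mulr1 //; lia.
Qed.

Lemma mem_prod_gens_index_family :
  prod_gens (fun i : 'I_N.+1 => affine_form F i) index_family =i vanishing_gens F.
Proof.
move=> g; rewrite vanishing_gensE.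
apply/flattenP/mapP => [[_ /mapP[s _ ->] /mapP[t]] | [t tF ->]].
  rewrite /index_family; case: eqP => // _ /mapP[t' t'F ->] ->.
  by exists t'; rewrite ?prod_index_family.
exists [seq \prod_(i <- u) affine_form F i
         | u : seq 'I_N.+1 <- index_family (size F).+1].
  by apply/mapP; exists (size F).+1; rewrite // mem_iota; lia.
apply/mapP; exists (rcons (map inord t) ord_max); last by rewrite prod_index_family.
by rewrite /index_family eqxx; apply: map_f.
Qed.

End IndexFamily.

Theorem lemma4 (K : fieldExtType rat) (n : nat) (Z : seq ('I_n -> K)) :
  exists (nbar : nat) (a : 'I_nbar -> {mpoly K[n]})
         (Gamma : nat -> seq (seq 'I_nbar)),
    [/\ (n < nbar)%N,
        (forall i, affine_linear (a i)),
        (forall s t, (1 <= s <= nbar)%N -> t \in Gamma s -> incr_tuple s t) &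
        (forall p : {mpoly K[n]},
            vanishes_on Z p <-> in_ideal_gen (prod_gens a Gamma) p)].
Proof.
pose F := undup [seq finfun z | z <- Z].
exists (size F * n + size F + n).+1, (fun i => affine_form F i), (index_family F); split.
- lia.
- by move=> i; apply: affine_linear_affine_form.
- by move=> s t _; apply: index_family_incr.
move=> p; rewrite (in_ideal_gen_eq_mem _ (mem_prod_gens_index_family F)).
rewrite -vanishing_gensP ?undup_uniq // /vanishes_on all_undup all_map.
by split; apply: sub_all => z /=; rewrite meval_finfun.
Qed.
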